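(* Let $n\ge2$, $1\le k\le n-1$. Let $Y$ have a continuous distribution function $G$ on $[l_G,r_G]$, and let $g$ be continuous and strictly increasing on $(l_G,r_G)$ with $g(l_G^+):=\lim_{y\to l_G^+}g(y)>-\infty$ and $\lim_{y\to r_G^-}g(y)=\infty$. Then \[ E[g(Y(n))\mid Y(n-k)=s,\ Y(n+1)=t]=\frac{k\,g(t)+g(s)}{k+1}\qquad (l_G<s<t<r_G) \] holds if and only if $G(y)=1-e^{-c[g(y)-g(l_G^+)]}$ for $l_G<y<r_G$, for some constant $c>0$.
   Context: $Y_1,Y_2,\dots$ are i.i.d. copies of $Y$ with distribution function $G$; $l_G=\inf\{y:G(y)>0\}$, $r_G=\sup\{y:G(y)<1\}$. Upper record times $L(1)=1$, $L(m)=\min\{j>L(m-1):Y_j>Y_{L(m-1)}\}$, record values $Y(m)=Y_{L(m)}$. With $R(y)=-\ln(1-G(y))$, conditional expectations given $Y(n-k)=s$, $Y(n+1)=t$ use the conditional density of $Y(n)$: $k[\frac{R(x)-R(s)}{R(t)-R(s)}]^{k-1}\frac{R'(x)}{R(t)-R(s)}$, $s<x<t$. *)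

From Stdlib Require Import Reals Lra.
Open Scope R_scope.

Definition is_cont_dist_fun (G : R -> R) : Prop :=
  (forall x y, x <= y -> G x <= G y) /\
  (forall x, continuity_pt G x) /\
  (forall eps, eps > 0 -> exists M, forall x, x <= M -> Rabs (G x) < eps) /\
  (forall eps, eps > 0 -> exists M, forall x, x >= M -> Rabs (G x - 1) < eps).

(* For continuous G, the open interval (l_G, r_G) is exactly {y | 0 < G y < 1}
   (this holds also when l_G = -oo or r_G = +oo). *)
Definition in_supp (G : R -> R) (y : R) : Prop := 0 < G y < 1.

Definition Rhaz (G : R -> R) (y : R) : R := - ln (1 - G y).

(* Conditional distribution function of Y(n) given Y(n-k)=s, Y(n+1)=t:
   F(x) = [(R(x)-R(s))/(R(t)-R(s))]^k on [s,t]; its density is the one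
   given in the paper when R is differentiable. *)
Definition rec_cond_cdf (G : R -> R) (k : nat) (s t x : R) : R :=
  ((Rhaz G x - Rhaz G s) / (Rhaz G t - Rhaz G s)) ^ k.

Fixpoint RS_sum_aux (f F : R -> R) (a h : R) (N : nat) : R :=
  match N with
  | O => 0
  | S m => RS_sum_aux f F a h m
           + f (a + INR m * h) * (F (a + INR (S m) * h) - F (a + INR m * h))
  end.

Definition RS_seq (f F : R -> R) (a b : R) (N : nat) : R :=
  RS_sum_aux f F a ((b - a) / INR (S N)) (S N).

(* E[g(Y(n)) | Y(n-k)=s, Y(n+1)=t] = v, i.e. the Riemann-Stieltjes integral
   int_s^t g dF (F the conditional cdf above) equals v. *)
Definition cond_exp_rec (G g : R -> R) (k : nat) (s t v : R) : Prop :=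
  Un_cv (RS_seq g (rec_cond_cdf G k s t) s t) v.

From Stdlib Require Import Reals Ranalysis5 Lra Lia Psatz.
Open Scope R_scope.

(* If [G = 1 - exp (- c (g - g(l_G+)))], the hazard [R = -ln (1 - G)] equals [c (g - g(l_G+))],
   the conditional cdf of [Y(n)] on [[s, t]] is [w^k] with [w = (g - g s) / (g t - g s)], and the
   conditional mean is [g s + (g t - g s) int_0^1 u d(u^k)].
   Conversely, fix [s] and put [B = (R - R s)^k], [A = g - g s].  The hypothesis says
   [int_s^t g dB = B t (g s + k A t / (k + 1))] for all [t]; comparing two values [t1 < t2]
   traps [int_t1^t2 g dB] between [g t1] and [g t2] times [B t2 - B t1], which forces
   [B / A^k] to change only by [O((A t2 - A t1)^2)], so it is constant.  Thus [R - R s] is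
   proportional to [g - g s], i.e. [R] is affine in [g], and since [R] vanishes at [l_G]
   while [g] tends to [g(l_G+)], [R = c (g - g(l_G+))]. *)

(** * Elementary real analysis *)

Lemma pow_tangent_le (n : nat) (a x : R) : 0 <= a -> 0 <= x ->
  a ^ S n + INR (S n) * a ^ n * (x - a) <= x ^ S n.
Proof.
  intros Ha Hx; induction n as [|n IH]; [simpl; lra|].
  assert (Hp : 0 <= a ^ n) by (apply pow_le; lra).
  assert (Hn : 0 <= INR n) by apply pos_INR.
  rewrite !S_INR in *; change (a ^ S (S n)) with (a * (a * a ^ n)) in *;
    change (x ^ S (S n)) with (x * x ^ S n) in *; change (a ^ S n) with (a * a ^ n) in *.
  set (p := a ^ n) in *; set (q := x ^ S n) in *; clearbody p q.
  assert (x * (a * p + (INR n + 1) * p * (x - a)) <= x * q)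
    by (apply Rmult_le_compat_l; lra).
  assert (0 <= (INR n + 1) * p * ((x - a) * (x - a)))
    by (apply Rmult_le_pos; [apply Rmult_le_pos; lra | apply Rle_0_sqr]).
  nra.
Qed.

Lemma pow_lt_compat (x y : R) (n : nat) : 0 <= x < y -> x ^ S n < y ^ S n.
Proof.
  intros [Hx Hxy]; induction n as [|n IH]; [simpl; lra|].
  change (x ^ S (S n)) with (x * x ^ S n); change (y ^ S (S n)) with (y * y ^ S n).
  assert (0 <= x ^ S n) by (apply pow_le; lra).
  nra.
Qed.

Lemma pow_inj_l (x y : R) (n : nat) : 0 <= x -> 0 <= y -> x ^ S n = y ^ S n -> x = y.
Proof.
  intros Hx Hy Heq; destruct (Rtotal_order x y) as [Hlt|[Hxy|Hgt]]; auto.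
  - pose proof (pow_lt_compat x y n ltac:(lra)); lra.
  - pose proof (pow_lt_compat y x n ltac:(lra)); lra.
Qed.

(* The discrete form of [int_w^w' u d(u^p) = p/(p+1) (w'^(p+1) - w^(p+1))]. *)
Lemma pow_increment_bounds (j : nat) (w w' : R) : 0 <= w <= w' ->
  w * (w' ^ S j - w ^ S j)
    <= INR (S j) / (INR (S j) + 1) * (w' ^ S (S j) - w ^ S (S j))
    <= w' * (w' ^ S j - w ^ S j).
Proof.
  intros [Hw Hww'].
  pose proof (pow_tangent_le (S j) w w' Hw ltac:(lra)) as T1.
  pose proof (pow_tangent_le (S j) w' w ltac:(lra) Hw) as T2.
  rewrite (S_INR (S j)) in T1, T2.
  set (K := INR (S j)) in *.
  assert (HK : 0 < K) by (apply lt_0_INR; lia).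
  change (w' ^ S (S j)) with (w' * w' ^ S j) in *; change (w ^ S (S j)) with (w * w ^ S j) in *.
  set (P := w ^ S j) in *; set (P' := w' ^ S j) in *; clearbody K P P'.
  split; apply (Rmult_le_reg_l (K + 1)); try lra;
    replace ((K + 1) * (K / (K + 1) * (w' * P' - w * P))) with (K * (w' * P' - w * P))
      by (field; lra); nra.
Qed.

Lemma eq0_of_abs_le_all (x M : R) : 0 <= M ->
  (forall eta, 0 < eta -> Rabs x <= eta * M) -> x = 0.
Proof.
  intros HM Hle; destruct (Req_dec x 0) as [|Hne]; auto; exfalso.
  assert (Hx : 0 < Rabs x) by (apply Rabs_pos_lt; auto).
  specialize (Hle (Rabs x / (2 * M + 2)) ltac:(apply Rdiv_lt_0_compat; lra)).
  assert (Rabs x / (2 * M + 2) * M < Rabs x); [|lra].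
  apply (Rmult_lt_reg_r (2 * M + 2)); [lra|].
  replace (Rabs x / (2 * M + 2) * M * (2 * M + 2)) with (Rabs x * M) by (field; lra).
  nra.
Qed.

Lemma ge0_of_left_approx (H : R -> R) (t : R) : continuity_pt H t ->
  (forall d, 0 < d -> exists y, t - d < y <= t /\ 0 <= H y) -> 0 <= H t.
Proof.
  intros Hc Happ; destruct (Rle_lt_dec 0 (H t)) as [|Hneg]; auto; exfalso.
  destruct (Hc (- H t) ltac:(lra)) as [d [Hd Hnear]].
  destruct (Happ d Hd) as [y [Hy HHy]].
  destruct (Req_dec y t) as [->|Hne]; [lra|].
  assert (Hdist : Rdist (H y) (H t) < - H t).
  { apply Hnear; split; [split; [exact I | auto]|].
    simpl; unfold Rdist; rewrite Rabs_left1 by lra; lra. }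
  unfold Rdist in Hdist; apply Rabs_def2 in Hdist; lra.
Qed.

Lemma continuity_pt_fct_cte (c x : R) : continuity_pt (fct_cte c) x.
Proof. apply continuity_pt_const; intros ? ?; reflexivity. Qed.

Lemma Un_cv_const (c : R) : Un_cv (fun _ => c) c.
Proof. intros eps Heps; exists 0%nat; intros; unfold Rdist; rewrite Rminus_diag, Rabs_R0; lra. Qed.

Lemma Un_cv_subseq (u : nat -> R) (l : R) (phi : nat -> nat) :
  (forall M, (M <= phi M)%nat) -> Un_cv u l -> Un_cv (fun M => u (phi M)) l.
Proof.
  intros Hphi Hu eps Heps; destruct (Hu eps Heps) as [N HN]; exists N.
  intros n Hn; apply HN; specialize (Hphi n); lia.
Qed.

(** * Riemann-Stieltjes sums on uniform grids *)

Lemma grid_point_in (a b : R) (N m : nat) : a < b -> (m <= S N)%nat ->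
  a <= a + INR m * ((b - a) / INR (S N)) <= b.
Proof.
  intros Hab Hm.
  assert (HN : 0 < INR (S N)) by (apply lt_0_INR; lia).
  assert (Hm' : 0 <= INR m <= INR (S N)) by (split; [apply pos_INR | apply le_INR; lia]).
  assert (Hh : 0 < (b - a) / INR (S N)) by (apply Rdiv_lt_0_compat; lra).
  assert (INR m * ((b - a) / INR (S N)) <= INR (S N) * ((b - a) / INR (S N)))
    by (apply Rmult_le_compat_r; lra).
  replace (INR (S N) * ((b - a) / INR (S N))) with (b - a) in * by (field; lra).
  nra.
Qed.

Lemma grid_last_point (a b : R) (N : nat) : a + INR (S N) * ((b - a) / INR (S N)) = b.
Proof. assert (0 < INR (S N)) by (apply lt_0_INR; lia); field; lra. Qed.

Lemma grid_mesh_small (a b delta : R) : a < b -> 0 < delta ->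
  exists N0, forall N, (N0 <= N)%nat -> (b - a) / INR (S N) < delta.
Proof.
  intros Hab Hdelta.
  destruct (archimed_cor1 (delta / (b - a))) as [N0 [HN0 HN0pos]];
    [apply Rdiv_lt_0_compat; lra|].
  exists N0; intros N HN.
  assert (HN0r : 0 < INR N0) by (apply lt_0_INR; lia).
  assert (INR N0 <= INR (S N)) by (apply le_INR; lia).
  assert (/ INR (S N) <= / INR N0) by (apply Rinv_le_contravar; lra).
  apply Rle_lt_trans with ((b - a) * / INR N0); [apply Rmult_le_compat_l; lra|].
  replace delta with ((b - a) * (delta / (b - a))) by (field; lra).
  apply Rmult_lt_compat_l; lra.
Qed.

Lemma RS_sum_aux_ext (f f' F F' : R -> R) (a h : R) (n : nat) :
  (forall m, (m <= n)%nat ->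
     f (a + INR m * h) = f' (a + INR m * h) /\ F (a + INR m * h) = F' (a + INR m * h)) ->
  RS_sum_aux f F a h n = RS_sum_aux f' F' a h n.
Proof.
  induction n as [|n IH]; intros Heq; [reflexivity|]; cbn [RS_sum_aux].
  destruct (Heq n ltac:(lia)) as [-> ->]; destruct (Heq (S n) ltac:(lia)) as [_ ->].
  rewrite IH; [reflexivity|]; intros m Hm; apply Heq; lia.
Qed.

Lemma RS_sum_aux_affine (c D : R) (f F : R -> R) (a h : R) (n : nat) :
  RS_sum_aux (fun x => c + D * f x) F a h n =
  c * (F (a + INR n * h) - F a) + D * RS_sum_aux f F a h n.
Proof.
  induction n as [|n IH]; cbn [RS_sum_aux].
  - replace (a + INR 0 * h) with a by (simpl; ring); ring.
  - rewrite IH; ring.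
Qed.

Lemma RS_sum_aux_scale (f F : R -> R) (c a h : R) (n : nat) :
  RS_sum_aux f (fun x => F x / c) a h n = RS_sum_aux f F a h n / c.
Proof.
  induction n as [|n IH]; cbn [RS_sum_aux]; [unfold Rdiv; ring|].
  rewrite IH; unfold Rdiv; ring.
Qed.

Lemma RS_sum_aux_range_bounds (f F : R -> R) (a h lo hi : R) (P j : nat) :
  (forall m, (P <= m < P + j)%nat ->
     lo <= f (a + INR m * h) <= hi /\ F (a + INR m * h) <= F (a + INR (S m) * h)) ->
  lo * (F (a + INR (P + j) * h) - F (a + INR P * h))
    <= RS_sum_aux f F a h (P + j) - RS_sum_aux f F a h P
    <= hi * (F (a + INR (P + j) * h) - F (a + INR P * h)).
Proof.
  induction j as [|j IH]; intros Hb; [rewrite Nat.add_0_r; lra|].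
  specialize (IH (fun m Hm => Hb m ltac:(lia))).
  rewrite Nat.add_succ_r; cbn [RS_sum_aux].
  destruct (Hb (P + j)%nat ltac:(lia)) as [[Hlo Hhi] HF].
  set (u := F (a + INR (S (P + j)) * h)) in *; set (u0 := F (a + INR (P + j) * h)) in *.
  set (fv := f (a + INR (P + j) * h)) in *; clearbody u u0 fv.
  assert (lo * (u - u0) <= fv * (u - u0)) by (apply Rmult_le_compat_r; lra).
  assert (fv * (u - u0) <= hi * (u - u0)) by (apply Rmult_le_compat_r; lra).
  lra.
Qed.

Lemma RS_sum_pow_bounds (w : R -> R) (a h eta : R) (j n : nat) : 0 <= w a ->
  (forall m, (m < n)%nat ->
     w (a + INR m * h) <= w (a + INR (S m) * h) <= w (a + INR m * h) + eta) ->
  INR (S j) / (INR (S j) + 1) * (w (a + INR n * h) ^ S (S j) - w a ^ S (S j))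
      - eta * (w (a + INR n * h) ^ S j - w a ^ S j)
    <= RS_sum_aux w (fun x => w x ^ S j) a h n
    <= INR (S j) / (INR (S j) + 1) * (w (a + INR n * h) ^ S (S j) - w a ^ S (S j)).
Proof.
  intros Hwa Hstep; induction n as [|n IH].
  - replace (a + INR 0 * h) with a by (simpl; ring); cbn [RS_sum_aux]; lra.
  - specialize (IH (fun m Hm => Hstep m ltac:(lia))); cbn [RS_sum_aux].
    assert (Hpos : forall m, (m <= n)%nat -> w a <= w (a + INR m * h)).
    { induction m as [|m IHm]; intros Hm.
      - replace (a + INR 0 * h) with a by (simpl; ring); lra.
      - pose proof (Hstep m ltac:(lia)); specialize (IHm ltac:(lia)); lra. }
    specialize (Hpos n (le_n n)); destruct (Hstep n (Nat.lt_succ_diag_r n)) as [Hle Heta].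
    set (u := w (a + INR n * h)) in *; set (u' := w (a + INR (S n) * h)) in *.
    destruct (pow_increment_bounds j u u' ltac:(lra)) as [T1 T2].
    assert (u ^ S j <= u' ^ S j) by (apply pow_incr; lra).
    assert ((u' - u) * (u' ^ S j - u ^ S j) <= eta * (u' ^ S j - u ^ S j))
      by (apply Rmult_le_compat_r; lra).
    lra.
Qed.

Lemma RS_seq_pow_cv (w : R -> R) (a b : R) (j : nat) : a < b ->
  (forall x, a <= x <= b -> continuity_pt w x) ->
  (forall x y, a <= x -> x <= y -> y <= b -> w x <= w y) -> 0 <= w a ->
  Un_cv (RS_seq w (fun x => w x ^ S j) a b)
        (INR (S j) / (INR (S j) + 1) * (w b ^ S (S j) - w a ^ S (S j))).
Proof.
  intros Hab Hcont Hmono Hwa eps Heps.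
  set (V := w b ^ S j - w a ^ S j).
  assert (HV : 0 <= V) by (assert (w a ^ S j <= w b ^ S j)
    by (apply pow_incr; split; [|apply Hmono]; lra); unfold V; lra).
  assert (Heta : 0 < eps / (V + 1)) by (apply Rdiv_lt_0_compat; lra).
  destruct (Heine_cor1 (f := w) Hab Hcont (mkposreal _ Heta)) as [delta [_ Hdelta]];
    simpl in Hdelta.
  destruct (grid_mesh_small a b delta Hab (cond_pos delta)) as [N0 HN0].
  exists N0; intros N HN; specialize (HN0 N HN).
  unfold RS_seq, Rdist; set (h := (b - a) / INR (S N)) in *.
  assert (Hh : 0 < h) by (apply Rdiv_lt_0_compat; [lra | apply lt_0_INR; lia]).
  destruct (RS_sum_pow_bounds w a h (eps / (V + 1)) j (S N) Hwa) as [Hlo Hhi].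
  { intros m Hm.
    pose proof (grid_point_in a b N m Hab ltac:(lia)) as Hx.
    pose proof (grid_point_in a b N (S m) Hab Hm) as Hx'; fold h in Hx, Hx'.
    rewrite S_INR in *; split; [apply Hmono; lra|].
    assert (Hclose : Rabs (w (a + (INR m + 1) * h) - w (a + INR m * h)) < eps / (V + 1))
      by (apply Hdelta; try lra; rewrite Rabs_right; lra).
    apply Rabs_def2 in Hclose; lra. }
  unfold h in Hlo, Hhi; rewrite grid_last_point in Hlo, Hhi; fold h V in Hlo; fold h in Hhi.
  assert (eps / (V + 1) * V < eps).
  { apply (Rmult_lt_reg_r (V + 1)); [lra|].
    replace (eps / (V + 1) * V * (V + 1)) with (eps * V) by (field; lra); nra. }
  apply Rabs_def1; lra.
Qed.

Lemma refined_grid_between (h0 : R) (p q M m : nat) : 0 < h0 ->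
  (p * S M <= m <= q * S M)%nat ->
  INR p * h0 <= INR m * (h0 / INR (S M)) <= INR q * h0.
Proof.
  intros Hh [Hpm Hmq].
  assert (HS : 0 < INR (S M)) by (apply lt_0_INR; lia).
  apply le_INR in Hpm, Hmq; rewrite mult_INR in Hpm, Hmq.
  assert (Hstep : 0 < h0 / INR (S M)) by (apply Rdiv_lt_0_compat; lra).
  replace (INR p * h0) with (INR p * INR (S M) * (h0 / INR (S M))) by (field; lra).
  replace (INR q * h0) with (INR q * INR (S M) * (h0 / INR (S M))) by (field; lra).
  split; apply Rmult_le_compat_r; lra.
Qed.

Lemma refined_grid_eq (h0 : R) (p M : nat) : INR (p * S M) * (h0 / INR (S M)) = INR p * h0.
Proof. assert (0 < INR (S M)) by (apply lt_0_INR; lia); rewrite mult_INR; field; lra. Qed.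

(** * Distribution functions and the hazard function *)

Lemma cont_dist_fun_mono (G : R -> R) : is_cont_dist_fun G ->
  forall x y, x <= y -> G x <= G y.
Proof. intros [Hmono _]; exact Hmono. Qed.

Lemma cont_dist_fun_surj (G : R -> R) (v : R) : is_cont_dist_fun G -> 0 < v < 1 ->
  exists y, G y = v.
Proof.
  intros [_ [Hc [Hleft Hright]]] Hv.
  destruct (Hleft v ltac:(lra)) as [M1 HM1]; destruct (Hright (1 - v) ltac:(lra)) as [M2 HM2].
  set (a := Rmin M1 (M2 - 1)).
  assert (Ha : G a < v)
    by (specialize (HM1 a (Rmin_l _ _)); apply Rabs_def2 in HM1; lra).
  assert (Hb : v < G M2) by (specialize (HM2 M2 ltac:(lra)); apply Rabs_def2 in HM2; lra).
  assert (Hab : a < M2) by (pose proof (Rmin_r M1 (M2 - 1)); unfold a; lra).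
  destruct (IVT_interv (fun x => G x - v) a M2) as [z [_ Hz]]; try lra.
  - intros x _; apply (continuity_pt_minus G (fct_cte v)); [apply Hc | apply continuity_pt_fct_cte].
  - exists z; lra.
Qed.

Lemma mono_lt_inv (G : R -> R) (x y : R) : (forall x y, x <= y -> G x <= G y) ->
  G x < G y -> x < y.
Proof.
  intros Hmono H; destruct (Rlt_le_dec x y) as [|Hle]; auto.
  pose proof (Hmono _ _ Hle); lra.
Qed.

Lemma in_supp_between (G : R -> R) (x y z : R) : (forall x y, x <= y -> G x <= G y) ->
  in_supp G x -> in_supp G z -> x <= y <= z -> in_supp G y.
Proof.
  intros Hmono [Hx _] [_ Hz] [Hxy Hyz]; pose proof (Hmono _ _ Hxy); pose proof (Hmono _ _ Hyz).
  split; lra.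
Qed.

Lemma incr_on_supp_le (G g : R -> R) (x y : R) :
  (forall x y, in_supp G x -> in_supp G y -> x < y -> g x < g y) ->
  in_supp G x -> in_supp G y -> x <= y -> g x <= g y.
Proof.
  intros Hg Hx Hy Hxy; destruct (Req_dec x y) as [->|Hne]; [lra|].
  left; apply Hg; auto; lra.
Qed.

Lemma ln_le_compat (x y : R) : 0 < x -> x <= y -> ln x <= ln y.
Proof.
  intros Hx Hxy; destruct (Req_dec x y) as [->|Hne]; [lra|].
  left; apply ln_increasing; lra.
Qed.

Lemma Rhaz_exp (G : R -> R) (x : R) : in_supp G x -> exp (- Rhaz G x) = 1 - G x.
Proof. intros [_ Hx]; unfold Rhaz; rewrite Ropp_involutive; apply exp_ln; lra. Qed.

Lemma Rhaz_le (G : R -> R) (x y : R) : in_supp G y -> G x <= G y -> Rhaz G x <= Rhaz G y.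
Proof.
  intros [_ Hy] Hxy; unfold Rhaz.
  assert (ln (1 - G y) <= ln (1 - G x)) by (apply ln_le_compat; lra); lra.
Qed.

Lemma Rhaz_lt (G : R -> R) (x y : R) : in_supp G y -> G x < G y -> Rhaz G x < Rhaz G y.
Proof.
  intros [_ Hy] Hxy; unfold Rhaz.
  assert (ln (1 - G y) < ln (1 - G x)) by (apply ln_increasing; lra); lra.
Qed.

Lemma Rhaz_nonneg (G : R -> R) (x : R) : in_supp G x -> 0 <= Rhaz G x.
Proof.
  intros [Hx0 Hx1]; unfold Rhaz.
  assert (ln (1 - G x) <= ln 1) by (apply ln_le_compat; lra); rewrite ln_1 in *; lra.
Qed.

Lemma Rhaz_le_twice (G : R -> R) (x : R) : in_supp G x -> G x <= 1 / 2 -> Rhaz G x <= 2 * G x.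
Proof.
  intros [Hx0 Hx1] Hhalf; unfold Rhaz; rewrite <- ln_Rinv by lra; rewrite <- (ln_exp (2 * G x)).
  apply ln_le_compat; [apply Rinv_0_lt_compat; lra|].
  apply Rle_trans with (1 + 2 * G x); [|apply exp_ineq1_le].
  apply (Rmult_le_reg_r (1 - G x)); [lra|]; rewrite Rinv_l by lra; nra.
Qed.

Lemma Rhaz_continuity_pt (G : R -> R) (x : R) : (forall x, continuity_pt G x) ->
  in_supp G x -> continuity_pt (Rhaz G) x.
Proof.
  intros Hc [_ Hx]; unfold Rhaz.
  change (continuity_pt (opp_fct (comp ln (minus_fct (fct_cte 1) G))) x).
  apply continuity_pt_opp, continuity_pt_comp.
  - apply continuity_pt_minus; [apply continuity_pt_fct_cte | apply Hc].
  - apply derivable_continuous_pt; exists (/ (fct_cte 1 x - G x)).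
    apply derivable_pt_lim_ln; unfold fct_cte; lra.
Qed.

Lemma Rhaz_exponential (G g : R -> R) (gl c y : R) :
  G y = 1 - exp (- c * (g y - gl)) -> Rhaz G y = c * (g y - gl).
Proof.
  intros HG; unfold Rhaz; rewrite HG.
  replace (1 - (1 - exp _)) with (exp (- c * (g y - gl))) by ring; rewrite ln_exp; ring.
Qed.

(** * An exponential hazard gives the regression identity *)

Lemma cond_exp_rec_exponential (G g : R -> R) (gl c : R) (k : nat) (s t : R) :
  (1 <= k)%nat -> (forall x y, x <= y -> G x <= G y) ->
  (forall y, in_supp G y -> continuity_pt g y) ->
  (forall x y, in_supp G x -> in_supp G y -> x < y -> g x < g y) ->
  c > 0 -> (forall y, in_supp G y -> G y = 1 - exp (- c * (g y - gl))) ->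
  in_supp G s -> in_supp G t -> s < t ->
  cond_exp_rec G g k s t ((INR k * g t + g s) / (INR k + 1)).
Proof.
  intros Hk Hmono Hgc Hgi Hc HG Hs Ht Hst; destruct k as [|j]; [lia|].
  pose proof (Hgi s t Hs Ht Hst) as Hgst.
  set (D := g t - g s); assert (HD : 0 < D) by (unfold D; lra).
  set (w := fun x => (g x - g s) / D).
  assert (Hsupp : forall x, s <= x <= t -> in_supp G x)
    by (intros x Hx; apply (in_supp_between G s x t); auto).
  assert (Hws : w s = 0) by (unfold w; rewrite Rminus_diag; unfold Rdiv; ring).
  assert (Hwt : w t = 1) by (unfold w; fold D; field; lra).
  assert (Hcdf : forall x, in_supp G x -> rec_cond_cdf G (S j) s t x = w x ^ S j).
  { intros x Hx; unfold rec_cond_cdf, w, D.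
    rewrite !(Rhaz_exponential G g gl c) by auto; f_equal; field; split; [lra|].
    replace (c * (g t - gl) - c * (g s - gl)) with (c * (g t - g s)) by ring.
    apply Rmult_integral_contrapositive_currified; lra. }
  assert (Hseq : forall N, RS_seq g (rec_cond_cdf G (S j) s t) s t N =
                           g s * 1 + D * RS_seq w (fun x => w x ^ S j) s t N).
  { intros N; unfold RS_seq.
    rewrite (RS_sum_aux_ext g (fun x => g s + D * w x) _ (fun x => w x ^ S j)).
    - rewrite RS_sum_aux_affine, grid_last_point, Hwt, Hws, pow1, pow_i by lia; ring.
    - intros m Hm; split; [unfold w; field; lra|].
      apply Hcdf, Hsupp, grid_point_in; auto. }
  assert (Hcv : Un_cv (RS_seq w (fun x => w x ^ S j) s t)
                      (INR (S j) / (INR (S j) + 1) * (w t ^ S (S j) - w s ^ S (S j)))).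
  { apply RS_seq_pow_cv; auto; try lra.
    - intros x Hx; unfold w, Rdiv.
      apply (continuity_pt_mult (fun y => g y - g s) (fct_cte (/ D)));
        [| apply continuity_pt_fct_cte].
      apply (continuity_pt_minus g (fct_cte (g s))); [apply Hgc, Hsupp; lra|].
      apply continuity_pt_fct_cte.
    - intros x y Hx Hxy Hy; unfold w, Rdiv.
      apply Rmult_le_compat_r; [left; apply Rinv_0_lt_compat; lra|].
      pose proof (incr_on_supp_le G g x y Hgi (Hsupp x ltac:(lra)) (Hsupp y ltac:(lra)) Hxy); lra. }
  rewrite Hwt, Hws, pow1, pow_i in Hcv by lia.
  replace ((INR (S j) * g t + g s) / (INR (S j) + 1))
    with (g s * 1 + D * (INR (S j) / (INR (S j) + 1) * (1 - 0)))
    by (assert (0 <= INR (S j)) by apply pos_INR; unfold D; field; lra).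
  unfold cond_exp_rec; eapply Un_cv_ext; [intros N; symmetry; apply Hseq|].
  apply CV_plus; [apply Un_cv_const | apply CV_mult; [apply Un_cv_const | exact Hcv]].
Qed.

(** * The regression identity forces an exponential hazard *)

Lemma pow_quotient_up (j : nat) (A1 A2 b1 b2 : R) : 0 < A1 <= A2 -> 0 <= b1 ->
  b2 * (A1 - INR (S j) * (A2 - A1)) <= A1 * b1 ->
  b2 / A2 ^ S j * (A1 ^ 2 - (INR (S j) * (A2 - A1)) ^ 2) <= b1 / A1 ^ S j * A1 ^ 2.
Proof.
  intros [HA1 HA12] Hb1 Hlow.
  pose proof (pow_tangent_le j A1 A2 ltac:(lra) ltac:(lra)) as Htan.
  assert (HK : 0 < INR (S j)) by (apply lt_0_INR; lia).
  assert (Hd : 0 <= A2 - A1) by lra.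
  assert (HP1 : 0 < A1 ^ j) by (apply pow_lt; lra).
  assert (HP2 : 0 < A2 ^ S j) by (apply pow_lt; lra).
  change (A1 ^ S j) with (A1 * A1 ^ j) in *.
  set (K := INR (S j)) in *; set (P1 := A1 ^ j) in *; set (P2 := A2 ^ S j) in *;
    set (d := A2 - A1) in *; clearbody K P1 P2 d.
  apply (Rmult_le_reg_r (P1 * P2)); [nra|].
  replace (b2 / P2 * (A1 ^ 2 - (K * d) ^ 2) * (P1 * P2))
    with (b2 * (A1 - K * d) * ((A1 + K * d) * P1)) by (field; lra).
  replace (b1 / (A1 * P1) * A1 ^ 2 * (P1 * P2)) with (A1 * b1 * P2) by (field; lra).
  assert (0 <= (A1 + K * d) * P1) by (apply Rmult_le_pos; nra).
  assert (b2 * (A1 - K * d) * ((A1 + K * d) * P1) <= A1 * b1 * ((A1 + K * d) * P1))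
    by (apply Rmult_le_compat_r; auto).
  assert (A1 * b1 * ((A1 + K * d) * P1) <= A1 * b1 * P2)
    by (apply Rmult_le_compat_l; nra).
  lra.
Qed.

Lemma pow_quotient_down (j : nat) (A1 A2 b1 b2 : R) : 0 < A1 <= A2 -> 0 <= b1 -> 0 <= b2 ->
  b1 * (A2 + INR (S j) * (A2 - A1)) <= A2 * b2 ->
  b1 / A1 ^ S j * (A2 ^ 2 - (INR (S j) * (A2 - A1)) ^ 2) <= b2 / A2 ^ S j * A2 ^ 2.
Proof.
  intros [HA1 HA12] Hb1 Hb2 Hup.
  pose proof (pow_tangent_le j A2 A1 ltac:(lra) ltac:(lra)) as Htan.
  replace (A1 - A2) with (- (A2 - A1)) in Htan by ring.
  assert (HK : 0 < INR (S j)) by (apply lt_0_INR; lia).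
  assert (Hd : 0 <= A2 - A1) by lra.
  assert (HP1 : 0 < A1 ^ S j) by (apply pow_lt; lra).
  assert (HP2 : 0 < A2 ^ j) by (apply pow_lt; lra).
  change (A2 ^ S j) with (A2 * A2 ^ j) in *.
  set (K := INR (S j)) in *; set (P1 := A1 ^ S j) in *; set (P2 := A2 ^ j) in *;
    set (d := A2 - A1) in *; clearbody K P1 P2 d.
  apply (Rmult_le_reg_r (P1 * P2)); [nra|].
  replace (b1 / P1 * (A2 ^ 2 - (K * d) ^ 2) * (P1 * P2))
    with (b1 * (A2 + K * d) * ((A2 - K * d) * P2)) by (field; lra).
  replace (b2 / (A2 * P2) * A2 ^ 2 * (P1 * P2)) with (A2 * b2 * P1) by (field; lra).
  assert (0 <= b1 * (A2 + K * d)) by (apply Rmult_le_pos; nra).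
  destruct (Rle_lt_dec 0 (A2 - K * d)) as [Hpos|Hneg].
  - assert (0 <= (A2 - K * d) * P2) by (apply Rmult_le_pos; lra).
    assert (b1 * (A2 + K * d) * ((A2 - K * d) * P2) <= A2 * b2 * ((A2 - K * d) * P2))
      by (apply Rmult_le_compat_r; auto).
    assert (A2 * b2 * ((A2 - K * d) * P2) <= A2 * b2 * P1)
      by (apply Rmult_le_compat_l; nra).
    lra.
  - assert ((A2 - K * d) * P2 <= 0) by nra.
    assert (0 <= A2 * b2 * P1) by (apply Rmult_le_pos; nra).
    nra.
Qed.

Lemma pow_quotient_step_bound (j : nat) (A1 A2 b1 b2 : R) :
  0 < A1 <= A2 -> 0 <= b1 -> 0 <= b2 ->
  b2 * (A1 - INR (S j) * (A2 - A1)) <= A1 * b1 ->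
  b1 * (A2 + INR (S j) * (A2 - A1)) <= A2 * b2 ->
  Rabs (b2 / A2 ^ S j - b1 / A1 ^ S j)
    <= (b1 / A1 ^ S j + b2 / A2 ^ S j) * (INR (S j) * (A2 - A1)) ^ 2 / A1 ^ 2.
Proof.
  intros HA Hb1 Hb2 Hlow Hup.
  pose proof (pow_quotient_up j A1 A2 b1 b2 HA Hb1 Hlow) as Hq2.
  pose proof (pow_quotient_down j A1 A2 b1 b2 HA Hb1 Hb2 Hup) as Hq1.
  assert (HQ1 : 0 <= b1 / A1 ^ S j)
    by (apply Rmult_le_pos; [lra | left; apply Rinv_0_lt_compat, pow_lt; lra]).
  assert (HQ2 : 0 <= b2 / A2 ^ S j)
    by (apply Rmult_le_pos; [lra | left; apply Rinv_0_lt_compat, pow_lt; lra]).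
  assert (HA1 : 0 < A1 ^ 2) by (apply pow_lt; lra).
  assert (HA12 : A1 ^ 2 <= A2 ^ 2) by (apply pow_incr; lra).
  set (Q1 := b1 / A1 ^ S j) in *; set (Q2 := b2 / A2 ^ S j) in *;
    set (E := (INR (S j) * (A2 - A1)) ^ 2) in *.
  assert (HE : 0 <= E) by apply pow2_ge_0.
  clearbody Q1 Q2 E.
  assert (Q2 - Q1 <= Q2 * E / A1 ^ 2).
  { apply (Rmult_le_reg_r (A1 ^ 2)); [lra|].
    replace (Q2 * E / A1 ^ 2 * A1 ^ 2) with (Q2 * E) by (field; lra); nra. }
  assert (Q1 - Q2 <= Q1 * E / A1 ^ 2).
  { apply (Rmult_le_reg_r (A2 ^ 2)); [lra|].
    replace (Q1 * E / A1 ^ 2 * A2 ^ 2) with (Q1 * E * (A2 ^ 2 / A1 ^ 2)) by (field; lra).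
    assert (1 <= A2 ^ 2 / A1 ^ 2).
    { apply (Rmult_le_reg_r (A1 ^ 2)); [lra|].
      replace (A2 ^ 2 / A1 ^ 2 * A1 ^ 2) with (A2 ^ 2) by (field; lra); lra. }
    assert (0 <= Q1 * E) by nra.
    nra. }
  replace ((Q1 + Q2) * E / A1 ^ 2) with (Q1 * E / A1 ^ 2 + Q2 * E / A1 ^ 2) by (field; lra).
  assert (0 <= Q1 * E / A1 ^ 2) by (apply Rmult_le_pos; [nra | left; apply Rinv_0_lt_compat; lra]).
  assert (0 <= Q2 * E / A1 ^ 2) by (apply Rmult_le_pos; [nra | left; apply Rinv_0_lt_compat; lra]).
  apply Rabs_le; lra.
Qed.

Lemma const_of_sq_increment_bound (f a : R -> R) (lo hi C : R) : lo < hi -> 0 <= C ->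
  (forall x, lo <= x <= hi -> continuity_pt a x) ->
  (forall x y, lo <= x -> x <= y -> y <= hi -> a x <= a y) ->
  (forall x y, lo <= x -> x < y -> y <= hi -> Rabs (f y - f x) <= C * (a y - a x) ^ 2) ->
  f hi = f lo.
Proof.
  intros Hlh HC Hcont Hmono Hstep.
  enough (f hi - f lo = 0) by lra.
  apply (eq0_of_abs_le_all _ (C * (a hi - a lo)));
    [apply Rmult_le_pos; auto; pose proof (Hmono lo hi); lra|].
  intros eta Heta.
  destruct (Heine_cor1 (f := a) Hlh Hcont (mkposreal eta Heta)) as [delta [_ Hdelta]];
    simpl in Hdelta.
  destruct (grid_mesh_small lo hi delta Hlh (cond_pos delta)) as [N HN];
    specialize (HN N (le_n N)); set (h := (hi - lo) / INR (S N)) in *.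
  assert (Hh : 0 < h) by (apply Rdiv_lt_0_compat; [lra | apply lt_0_INR; lia]).
  assert (Hind : forall m, (m <= S N)%nat ->
            Rabs (f (lo + INR m * h) - f lo) <= eta * (C * (a (lo + INR m * h) - a lo))).
  { induction m as [|m IH]; intros Hm.
    - replace (lo + INR 0 * h) with lo by (simpl; ring).
      rewrite Rminus_diag, Rabs_R0; lra.
    - specialize (IH ltac:(lia)).
      pose proof (grid_point_in lo hi N m Hlh ltac:(lia)) as Hx.
      pose proof (grid_point_in lo hi N (S m) Hlh Hm) as Hx'; fold h in Hx, Hx'.
      rewrite S_INR in *; set (x := lo + INR m * h) in *; set (x' := lo + (INR m + 1) * h) in *.
      assert (Hxx' : x < x') by (unfold x, x'; lra).
      pose proof (Hstep x x' ltac:(lra) Hxx' ltac:(lra)) as Hsq.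
      assert (Hclose : Rabs (a x' - a x) < eta)
        by (apply Hdelta; try lra; unfold x, x'; rewrite Rabs_right; lra).
      pose proof (Hmono x x' ltac:(lra) ltac:(lra) ltac:(lra)) as Hax.
      rewrite Rabs_right in Hclose by lra.
      assert (C * (a x' - a x) ^ 2 <= eta * (C * (a x' - a x))).
      { replace (C * (a x' - a x) ^ 2) with (C * (a x' - a x) * (a x' - a x)) by ring.
        rewrite (Rmult_comm eta); apply Rmult_le_compat_l; [apply Rmult_le_pos|]; lra. }
      replace (f x' - f lo) with ((f x' - f x) + (f x - f lo)) by ring.
      eapply Rle_trans; [apply Rabs_triang|]; lra. }
  specialize (Hind (S N) (le_n _)); unfold h in Hind; rewrite grid_last_point in Hind.
  exact Hind.
Qed.

Section FixedBase.

Variables (G g : R -> R) (k : nat) (s : R).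
Hypothesis G_dist : is_cont_dist_fun G.
Hypothesis k_pos : (1 <= k)%nat.
Hypothesis g_cont : forall y, in_supp G y -> continuity_pt g y.
Hypothesis g_incr : forall x y, in_supp G x -> in_supp G y -> x < y -> g x < g y.
Hypothesis s_supp : in_supp G s.
Hypothesis cond_exp : forall t, in_supp G t -> s < t -> G s < G t ->
  cond_exp_rec G g k s t ((INR k * g t + g s) / (INR k + 1)).

Let G_mono : forall x y, x <= y -> G x <= G y := cont_dist_fun_mono G G_dist.

(* [B] is the conditional cdf up to normalisation, and the hypothesis says that
   [int_s^t g dB = V t] for every admissible [t]. *)
Let B (x : R) : R := (Rhaz G x - Rhaz G s) ^ k.
Let V (t : R) : R := B t * (INR k * g t + g s) / (INR k + 1).
Let above (t : R) : Prop := in_supp G t /\ G s < G t.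

Lemma above_gt (t : R) : above t -> s < t.
Proof. intros [_ Ht]; exact (mono_lt_inv G s t G_mono Ht). Qed.

Lemma B_nonneg (x : R) : in_supp G x -> s <= x -> 0 <= B x.
Proof. intros Hx Hsx; apply pow_le; pose proof (Rhaz_le G s x Hx (G_mono s x Hsx)); lra. Qed.

Lemma B_mono (x y : R) : in_supp G x -> in_supp G y -> s <= x -> x <= y -> B x <= B y.
Proof.
  intros Hx Hy Hsx Hxy; apply pow_incr.
  pose proof (Rhaz_le G s x Hx (G_mono s x Hsx)); pose proof (Rhaz_le G x y Hy (G_mono x y Hxy)).
  lra.
Qed.

Lemma B_continuity_pt (x : R) : in_supp G x -> continuity_pt B x.
Proof.
  intros Hx; unfold B.
  change (continuity_pt (comp (fun y => y ^ k) (minus_fct (Rhaz G) (fct_cte (Rhaz G s)))) x).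
  apply continuity_pt_comp; [|apply derivable_continuous_pt, derivable_pt_pow].
  apply continuity_pt_minus; [apply Rhaz_continuity_pt; [apply G_dist | exact Hx]|].
  apply continuity_pt_fct_cte.
Qed.

Lemma V_continuity_pt (x : R) : in_supp G x -> continuity_pt V x.
Proof.
  intros Hx; unfold V, Rdiv.
  apply (continuity_pt_mult (fun t => B t * (INR k * g t + g s)) (fct_cte (/ (INR k + 1))));
    [|apply continuity_pt_fct_cte].
  apply (continuity_pt_mult B (fun t => INR k * g t + g s)); [apply B_continuity_pt, Hx|].
  apply (continuity_pt_plus (fun t => INR k * g t) (fct_cte (g s)));
    [|apply continuity_pt_fct_cte].
  apply (continuity_pt_scal g (INR k)), g_cont, Hx.
Qed.

Lemma RS_B_cv (t : R) : above t ->
  Un_cv (fun N => RS_sum_aux g B s ((t - s) / INR (S N)) (S N)) (V t).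
Proof.
  intros [Ht HGt]; pose proof (above_gt t (conj Ht HGt)) as Hst.
  assert (HBt : B t <> 0)
    by (apply pow_nonzero; pose proof (Rhaz_lt G s t Ht HGt); lra).
  pose proof (CV_mult _ _ _ _ (cond_exp t Ht Hst HGt) (Un_cv_const (B t))) as Hcv.
  replace (V t) with ((INR k * g t + g s) / (INR k + 1) * B t) by (unfold V, Rdiv; ring).
  eapply Un_cv_ext; [|exact Hcv]; intros N; unfold RS_seq.
  rewrite (RS_sum_aux_ext g g _ (fun x => B x / B t)), RS_sum_aux_scale; [field; exact HBt|].
  intros m _; split; [reflexivity|].
  unfold rec_cond_cdf, B, Rdiv; rewrite Rpow_mult_distr, pow_inv; reflexivity.
Qed.

Lemma RS_B_refined_cv (p : nat) (h0 : R) : (1 <= p)%nat -> 0 < h0 -> above (s + INR p * h0) ->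
  Un_cv (fun M => RS_sum_aux g B s (h0 / INR (S M)) (p * S M)) (V (s + INR p * h0)).
Proof.
  intros Hp Hh Habove.
  assert (Hsub : forall M, S (p * S M - 1) = (p * S M)%nat)
    by (intros; destruct p; [lia | simpl; lia]).
  pose proof (Un_cv_subseq _ _ (fun M => (p * S M - 1)%nat)
                ltac:(intros; destruct p; [lia | simpl; lia])
                (RS_B_cv _ Habove)) as Hcv.
  eapply Un_cv_ext; [|exact Hcv]; intros M; cbv beta; rewrite Hsub; f_equal.
  assert (0 < INR (S M)) by (apply lt_0_INR; lia); assert (0 < INR p) by (apply lt_0_INR; lia).
  rewrite mult_INR; field; lra.
Qed.

(* On grids refining a common grid containing [t1] and [t2], the difference of the two
   Riemann-Stieltjes sums is itself a sum over [[t1, t2]], with integrand in [[g t1, g t2]]. *)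
Lemma B_grid_increment_bounds (p q : nat) (h0 : R) :
  (1 <= p)%nat -> (p < q)%nat -> 0 < h0 ->
  above (s + INR p * h0) -> in_supp G (s + INR q * h0) ->
  g (s + INR p * h0) * (B (s + INR q * h0) - B (s + INR p * h0))
    <= V (s + INR q * h0) - V (s + INR p * h0)
    <= g (s + INR q * h0) * (B (s + INR q * h0) - B (s + INR p * h0)).
Proof.
  intros Hp Hpq Hh Ht1 Ht2supp.
  assert (Hpq' : INR p * h0 < INR q * h0)
    by (apply Rmult_lt_compat_r; [lra | apply lt_INR; lia]).
  pose proof (above_gt _ Ht1) as Hst1.
  set (t1 := s + INR p * h0) in *; set (t2 := s + INR q * h0) in *.
  assert (Ht2 : above t2)
    by (split; [exact Ht2supp|];
        pose proof (G_mono t1 t2 ltac:(unfold t1, t2; lra)); destruct Ht1; lra).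
  pose proof (CV_minus _ _ _ _ (RS_B_refined_cv q h0 ltac:(lia) Hh Ht2)
                              (RS_B_refined_cv p h0 Hp Hh Ht1)) as Hcv.
  set (S_M := fun M => RS_sum_aux g B s (h0 / INR (S M)) (q * S M)
                       - RS_sum_aux g B s (h0 / INR (S M)) (p * S M)) in Hcv.
  assert (Hbounds : forall M, g t1 * (B t2 - B t1) <= S_M M <= g t2 * (B t2 - B t1)).
  { intros M; unfold S_M.
    assert (Hpt : forall m, (p * S M <= m <= q * S M)%nat ->
              t1 <= s + INR m * (h0 / INR (S M)) <= t2 /\ in_supp G (s + INR m * (h0 / INR (S M)))).
    { intros m Hm; pose proof (refined_grid_between h0 p q M m Hh Hm).
      assert (t1 <= s + INR m * (h0 / INR (S M)) <= t2) by (unfold t1, t2; lra).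
      split; [assumption|]; apply (in_supp_between G t1 _ t2); auto; apply Ht1. }
    pose proof (RS_sum_aux_range_bounds g B s (h0 / INR (S M)) (g t1) (g t2)
                  (p * S M) ((q - p) * S M)) as Hrange.
    replace (p * S M + (q - p) * S M)%nat with (q * S M)%nat in Hrange by nia.
    rewrite !refined_grid_eq in Hrange; apply Hrange.
    intros m Hm; destruct (Hpt m ltac:(nia)) as [Hm12 Hmsupp];
      destruct (Hpt (S m) ltac:(nia)) as [HSm12 HSmsupp].
    assert (s + INR m * (h0 / INR (S M)) <= s + INR (S m) * (h0 / INR (S M))).
    { rewrite (S_INR m).
      assert (0 < h0 / INR (S M)) by (apply Rdiv_lt_0_compat; [lra | apply lt_0_INR; lia]).
      lra. }
    split; [split|]; try apply (incr_on_supp_le G g); auto; try apply Ht1; try lra.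
    apply B_mono; auto; lra. }
  split; [apply (Rle_cv_lim (Un := fun _ => g t1 * (B t2 - B t1)) (Vn := S_M)) |
          apply (Rle_cv_lim (Un := S_M) (Vn := fun _ => g t2 * (B t2 - B t1)))];
    try apply Hbounds; auto; apply Un_cv_const.
Qed.

Lemma B_increment_bounds_approx (t1 t2 d : R) : above t1 -> in_supp G t2 -> t1 < t2 -> 0 < d ->
  exists y, t2 - d < y <= t2 /\
    g t1 * (B y - B t1) <= V y - V t1 <= g y * (B y - B t1).
Proof.
  intros Ht1 Ht2 H12 Hd; pose proof (above_gt t1 Ht1) as Hst1.
  pose proof (Rmin_l d (t2 - t1)); pose proof (Rmin_r d (t2 - t1)).
  destruct (grid_mesh_small s t1 (Rmin d (t2 - t1)) Hst1 ltac:(apply Rmin_pos; lra)) as [n Hn];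
    specialize (Hn n (le_n n)).
  pose proof (grid_last_point s t1 n) as Ht1e; set (h0 := (t1 - s) / INR (S n)) in *.
  assert (Hh0 : 0 < h0) by (apply Rdiv_lt_0_compat; [lra | apply lt_0_INR; lia]).
  destruct (maxN (a := s) (b := t2) (mkposreal h0 Hh0) ltac:(lra)) as [q [Hq1 Hq2]];
    change (pos (mkposreal h0 Hh0)) with h0 in Hq1, Hq2.
  rewrite S_INR in Hq2.
  assert (Hnq : (S n < q)%nat)
    by (apply INR_lt, (Rmult_lt_reg_r h0); lra).
  assert (Hy : in_supp G (s + INR q * h0))
    by (apply (in_supp_between G t1 _ t2); auto; [apply Ht1 | lra]).
  exists (s + INR q * h0); split; [lra|].
  rewrite <- Ht1e in Ht1 |- *; apply B_grid_increment_bounds; auto; lia.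
Qed.

Lemma B_increment_bounds (t1 t2 : R) : above t1 -> in_supp G t2 -> t1 < t2 ->
  g t1 * (B t2 - B t1) <= V t2 - V t1 <= g t2 * (B t2 - B t1).
Proof.
  intros Ht1 Ht2 H12.
  assert (HB : continuity_pt (fun t => B t - B t1) t2)
    by exact (continuity_pt_minus B _ t2 (B_continuity_pt t2 Ht2)
               (continuity_pt_fct_cte (B t1) t2)).
  assert (HV : continuity_pt (fun t => V t - V t1) t2)
    by exact (continuity_pt_minus V _ t2 (V_continuity_pt t2 Ht2)
               (continuity_pt_fct_cte (V t1) t2)).
  split.
  - enough (0 <= (V t2 - V t1) - g t1 * (B t2 - B t1)) by lra.
    apply (ge0_of_left_approx (fun t => (V t - V t1) - g t1 * (B t - B t1))).
    + apply (continuity_pt_minus (fun t => V t - V t1) (fun t => g t1 * (B t - B t1))); auto.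
      exact (continuity_pt_scal _ (g t1) t2 HB).
    + intros d Hd; destruct (B_increment_bounds_approx t1 t2 d Ht1 Ht2 H12 Hd) as [y [Hy Hb]].
      exists y; split; [exact Hy | lra].
  - enough (0 <= g t2 * (B t2 - B t1) - (V t2 - V t1)) by lra.
    apply (ge0_of_left_approx (fun t => g t * (B t - B t1) - (V t - V t1))).
    + apply (continuity_pt_minus (fun t => g t * (B t - B t1)) (fun t => V t - V t1)); auto.
      exact (continuity_pt_mult g _ t2 (g_cont t2 Ht2) HB).
    + intros d Hd; destruct (B_increment_bounds_approx t1 t2 d Ht1 Ht2 H12 Hd) as [y [Hy Hb]].
      exists y; split; [exact Hy | lra].
Qed.

Let A (x : R) : R := g x - g s.
Let Psi (x : R) : R := B x / A x ^ k.

Lemma Psi_step (y y' : R) : above y -> in_supp G y' -> y < y' ->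
  Rabs (Psi y' - Psi y) <= (Psi y + Psi y') * (INR k * (A y' - A y)) ^ 2 / A y ^ 2.
Proof.
  intros Hy Hy' Hyy'; destruct (B_increment_bounds y y' Hy Hy' Hyy') as [Hlow Hup].
  pose proof (above_gt y Hy) as Hsy; destruct Hy as [Hysupp _].
  assert (HA : 0 < A y) by (pose proof (g_incr s y s_supp Hysupp Hsy); unfold A; lra).
  assert (HAA : A y <= A y') by (pose proof (g_incr y y' Hysupp Hy' Hyy'); unfold A; lra).
  assert (Hb : 0 <= B y) by (apply B_nonneg; auto; lra).
  assert (Hb' : 0 <= B y') by (apply B_nonneg; auto; lra).
  assert (HK : 0 < INR k) by (apply lt_0_INR; lia).
  assert (HVA : forall x, V x = INR k / (INR k + 1) * (A x * B x) + g s * B x)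
    by (intros; unfold V, A; field; lra).
  rewrite !HVA in Hlow, Hup; unfold Psi.
  replace (g y) with (A y + g s) in Hlow by (unfold A; ring).
  replace (g y') with (A y' + g s) in Hup by (unfold A; ring).
  set (K := INR k) in *; set (a1 := A y) in *; set (a2 := A y') in *;
    set (b1 := B y) in *; set (b2 := B y') in *; clearbody a1 a2 b1 b2.
  apply (Rmult_le_compat_l (K + 1)) in Hlow, Hup; try lra.
  replace ((K + 1) * (K / (K + 1) * (a2 * b2) + g s * b2 - (K / (K + 1) * (a1 * b1) + g s * b1)))
    with (K * (a2 * b2 - a1 * b1) + (K + 1) * (g s * (b2 - b1))) in Hlow, Hup by (field; lra).
  assert (Hl : b2 * (a1 - K * (a2 - a1)) <= a1 * b1) by lra.
  assert (Hu : b1 * (a2 + K * (a2 - a1)) <= a2 * b2) by lra.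
  assert (Hk : k = S (pred k)) by lia; unfold K in *; rewrite Hk in Hl, Hu |- *.
  apply pow_quotient_step_bound; auto.
Qed.

Lemma Psi_const (lo hi : R) : above lo -> in_supp G hi -> lo < hi -> Psi hi = Psi lo.
Proof.
  intros Hlo Hhi Hlh; pose proof (above_gt lo Hlo) as Hslo; destruct Hlo as [Hlosupp HGlo].
  assert (Hsupp : forall y, lo <= y <= hi -> in_supp G y)
    by (intros y Hy; apply (in_supp_between G lo y hi); auto).
  assert (Habove : forall y, lo <= y <= hi -> above y)
    by (intros y Hy; split; [auto | pose proof (G_mono lo y ltac:(lra)); lra]).
  assert (Ha0 : 0 < A lo) by (pose proof (g_incr s lo s_supp Hlosupp Hslo); unfold A; lra).
  assert (HA : forall x y, lo <= x -> x <= y -> y <= hi -> A x <= A y).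
  { intros x y Hx Hxy Hy; unfold A.
    pose proof (incr_on_supp_le G g x y g_incr (Hsupp x ltac:(lra)) (Hsupp y ltac:(lra)) Hxy).
    lra. }
  set (Pm := B hi / A lo ^ k).
  assert (HPsi : forall y, lo <= y <= hi -> 0 <= Psi y <= Pm).
  { intros y Hy; pose proof (HA lo y ltac:(lra) ltac:(lra) ltac:(lra)).
    assert (HAk : A lo ^ k <= A y ^ k) by (apply pow_incr; lra).
    assert (0 < A lo ^ k) by (apply pow_lt; lra).
    assert (Hb : 0 <= B y) by (apply B_nonneg; [apply Hsupp |]; lra).
    assert (B y <= B hi) by (apply B_mono; [apply Hsupp | | |]; auto; lra).
    unfold Psi, Pm, Rdiv; split; [apply Rmult_le_pos; [lra | left; apply Rinv_0_lt_compat; lra]|].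
    apply Rmult_le_compat; auto;
      [left; apply Rinv_0_lt_compat; lra | apply Rinv_le_contravar; lra]. }
  apply (const_of_sq_increment_bound Psi A lo hi (2 * Pm * INR k ^ 2 / A lo ^ 2)); auto.
  - assert (0 <= Pm) by (pose proof (HPsi hi ltac:(lra)); lra).
    apply Rmult_le_pos; [nra | left; apply Rinv_0_lt_compat, pow_lt; lra].
  - intros x Hx; apply (continuity_pt_minus g (fct_cte (g s))); [apply g_cont, Hsupp, Hx|].
    apply continuity_pt_fct_cte.
  - intros x y Hx Hxy Hy; eapply Rle_trans; [apply Psi_step; auto; apply Habove; lra|].
    pose proof (HPsi x ltac:(lra)); pose proof (HPsi y ltac:(lra)).
    pose proof (HA lo x ltac:(lra) ltac:(lra) ltac:(lra)).
    assert (Hsq : A lo ^ 2 <= A x ^ 2) by (apply pow_incr; lra).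
    assert (0 < A lo ^ 2) by (apply pow_lt; lra).
    assert (0 <= (INR k * (A y - A x)) ^ 2) by apply pow2_ge_0.
    replace (2 * Pm * INR k ^ 2 / A lo ^ 2 * (A y - A x) ^ 2)
      with (2 * Pm * (INR k * (A y - A x)) ^ 2 / A lo ^ 2) by (field; lra).
    unfold Rdiv; apply Rmult_le_compat; [nra | left; apply Rinv_0_lt_compat; nra | | ].
    + apply Rmult_le_compat_r; lra.
    + apply Rinv_le_contravar; lra.
Qed.

(* [Psi] is constant, so [(R t - R s)^k] is proportional to [(g t - g s)^k]. *)
Lemma hazard_incr_proportional :
  exists mu, forall t, above t -> Rhaz G t - Rhaz G s = mu * (g t - g s).
Proof.
  destruct s_supp as [Hs0 Hs1].
  destruct (cont_dist_fun_surj G ((G s + 1) / 2) G_dist ltac:(lra)) as [t0 Ht0].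
  assert (Ht0above : above t0) by (unfold above, in_supp; lra).
  assert (Hratio : forall u, above u ->
            Psi u = ((Rhaz G u - Rhaz G s) / A u) ^ k /\ 0 <= (Rhaz G u - Rhaz G s) / A u).
  { intros u Hu; pose proof (above_gt u Hu) as Hsu; destruct Hu as [Husupp HGu].
    assert (0 < A u) by (pose proof (g_incr s u s_supp Husupp Hsu); unfold A; lra).
    pose proof (Rhaz_le G s u Husupp (G_mono s u ltac:(lra))).
    split; [unfold Psi, B, Rdiv; rewrite Rpow_mult_distr, pow_inv; reflexivity|].
    apply Rmult_le_pos; [lra | left; apply Rinv_0_lt_compat; lra]. }
  exists ((Rhaz G t0 - Rhaz G s) / A t0); intros t Ht.
  assert (HPsi : Psi t = Psi t0).
  { destruct (Rtotal_order t t0) as [Hlt|[->|Hgt]]; [| reflexivity |].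
    - symmetry; apply Psi_const; auto; apply Ht0above.
    - apply Psi_const; auto; apply Ht. }
  destruct (Hratio t Ht) as [Et Ht_nonneg]; destruct (Hratio t0 Ht0above) as [Et0 Ht0_nonneg].
  rewrite Et, Et0 in HPsi.
  assert (Hk : k = S (pred k)) by lia; rewrite Hk in HPsi.
  apply pow_inj_l in HPsi; auto.
  rewrite <- HPsi; unfold A; field.
  pose proof (above_gt t Ht); pose proof (g_incr s t s_supp (proj1 Ht)); lra.
Qed.

End FixedBase.

Lemma hazard_affine (G g : R -> R) (k : nat) :
  is_cont_dist_fun G -> (1 <= k)%nat ->
  (forall y, in_supp G y -> continuity_pt g y) ->
  (forall x y, in_supp G x -> in_supp G y -> x < y -> g x < g y) ->
  (forall s t, in_supp G s -> in_supp G t -> s < t -> G s < G t ->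
     cond_exp_rec G g k s t ((INR k * g t + g s) / (INR k + 1))) ->
  exists alpha mu, 0 < mu /\ forall y, in_supp G y -> Rhaz G y = alpha + mu * g y.
Proof.
  intros HG Hk Hgc Hgi Hcond; pose proof (cont_dist_fun_mono G HG) as Hmono.
  assert (Hslope : forall s, in_supp G s -> exists mu, forall t, in_supp G t -> G s < G t ->
                     Rhaz G t - Rhaz G s = mu * (g t - g s)).
  { intros s Hs.
    destruct (hazard_incr_proportional G g k s HG Hk Hgc Hgi Hs (fun t Ht => Hcond s t Hs Ht))
      as [mu Hmu]; exists mu; intros t Ht HGt; apply Hmu; split; auto. }
  destruct (cont_dist_fun_surj G (1 / 2) HG ltac:(lra)) as [s0 Hs0].
  destruct (cont_dist_fun_surj G (3 / 4) HG ltac:(lra)) as [u1 Hu1].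
  destruct (cont_dist_fun_surj G (7 / 8) HG ltac:(lra)) as [u2 Hu2].
  assert (Hs0supp : in_supp G s0) by (unfold in_supp; lra).
  assert (Hu1supp : in_supp G u1) by (unfold in_supp; lra).
  assert (Hu2supp : in_supp G u2) by (unfold in_supp; lra).
  assert (Hg12 : g u1 < g u2) by (apply Hgi; auto; apply (mono_lt_inv G); auto; lra).
  destruct (Hslope s0 Hs0supp) as [mu Hmu].
  (* Any two slope constants agree, being both the slope between [u1] and [u2]. *)
  assert (Hsame : forall y mu', in_supp G y -> G y <= 1 / 2 ->
            (forall t, in_supp G t -> G y < G t -> Rhaz G t - Rhaz G y = mu' * (g t - g y)) ->
            mu' = mu).
  { intros y mu' Hy HGy Hmu'.
    pose proof (Hmu' u1 Hu1supp ltac:(lra)); pose proof (Hmu' u2 Hu2supp ltac:(lra)).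
    pose proof (Hmu u1 Hu1supp ltac:(lra)); pose proof (Hmu u2 Hu2supp ltac:(lra)).
    assert (Hz : (mu' - mu) * (g u2 - g u1) = 0) by nra.
    apply Rmult_integral in Hz; lra. }
  exists (Rhaz G s0 - mu * g s0), mu; split.
  - pose proof (Rhaz_lt G s0 u1 Hu1supp ltac:(lra)); pose proof (Hmu u1 Hu1supp ltac:(lra)).
    assert (g s0 < g u1) by (apply Hgi; auto; apply (mono_lt_inv G); auto; lra).
    nra.
  - intros y Hy; destruct (Rlt_le_dec (G s0) (G y)) as [Hgt|Hle].
    + pose proof (Hmu y Hy Hgt); lra.
    + destruct (Hslope y Hy) as [muy Hmuy].
      pose proof (Hsame y muy Hy ltac:(lra) Hmuy) as ->.
      pose proof (Hmuy u1 Hu1supp ltac:(lra)); pose proof (Hmu u1 Hu1supp ltac:(lra)).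
      lra.
Qed.

Lemma affine_hazard_left_limit (G g : R -> R) (gl alpha mu : R) :
  is_cont_dist_fun G -> 0 < mu ->
  (forall y, in_supp G y -> Rhaz G y = alpha + mu * g y) ->
  (forall eps, eps > 0 -> exists y0, in_supp G y0 /\
     forall y, in_supp G y -> y < y0 -> Rabs (g y - gl) < eps) ->
  alpha + mu * gl = 0.
Proof.
  intros HG Hmu Haff Hgl; pose proof (cont_dist_fun_mono G HG) as Hmono.
  apply (eq0_of_abs_le_all _ (2 + mu)); [lra|]; intros eta Heta.
  pose proof (Rmin_l eta (1 / 4)); pose proof (Rmin_r eta (1 / 4)).
  set (e := Rmin eta (1 / 4)) in *.
  assert (He : 0 < e) by (apply Rmin_pos; lra).
  destruct (Hgl e He) as [y0 [[Hy0 Hy0'] Hnear]].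
  (* A point [y] below [y0] where [G] (hence the hazard) is also below [e]. *)
  pose proof (Rmin_l e (G y0)); pose proof (Rmin_r e (G y0)).
  set (v := Rmin e (G y0) / 2).
  assert (Hv : 0 < v) by (apply Rdiv_lt_0_compat; [apply Rmin_pos|]; lra).
  assert (Hvy0 : v < G y0) by (unfold v; lra).
  assert (Hve : v < e) by (unfold v; lra).
  destruct (cont_dist_fun_surj G v HG ltac:(lra)) as [y Hy].
  assert (Hysupp : in_supp G y) by (unfold in_supp; lra).
  assert (Hyy0 : y < y0) by (apply (mono_lt_inv G); auto; lra).
  pose proof (Hnear y Hysupp Hyy0) as Hgy; apply Rabs_def2 in Hgy.
  pose proof (Rhaz_le_twice G y Hysupp ltac:(lra)).
  pose proof (Rhaz_nonneg G y Hysupp).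
  rewrite (Haff y Hysupp) in *.
  replace (alpha + mu * gl) with ((alpha + mu * g y) - mu * (g y - gl)) by ring.
  apply Rabs_le; split; nra.
Qed.

Lemma exponential_of_cond_exp (G g : R -> R) (k : nat) (gl : R) :
  is_cont_dist_fun G -> (1 <= k)%nat ->
  (forall y, in_supp G y -> continuity_pt g y) ->
  (forall x y, in_supp G x -> in_supp G y -> x < y -> g x < g y) ->
  (forall eps, eps > 0 -> exists y0, in_supp G y0 /\
     forall y, in_supp G y -> y < y0 -> Rabs (g y - gl) < eps) ->
  (forall s t, in_supp G s -> in_supp G t -> s < t -> G s < G t ->
     cond_exp_rec G g k s t ((INR k * g t + g s) / (INR k + 1))) ->
  exists c, c > 0 /\ forall y, in_supp G y -> G y = 1 - exp (- c * (g y - gl)).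
Proof.
  intros HG Hk Hgc Hgi Hgl Hcond.
  destruct (hazard_affine G g k HG Hk Hgc Hgi Hcond) as [alpha [mu [Hmu Haff]]].
  pose proof (affine_hazard_left_limit G g gl alpha mu HG Hmu Haff Hgl) as Hzero.
  exists mu; split; [exact Hmu|]; intros y Hy.
  pose proof (Rhaz_exp G y Hy) as Hexp; rewrite (Haff y Hy) in Hexp.
  replace (- mu * (g y - gl)) with (- (alpha + mu * g y)) by lra; lra.
Qed.

Theorem corollary1 (n k : nat) (G g : R -> R) (gl : R) :
  (2 <= n)%nat -> (1 <= k)%nat -> (k <= n - 1)%nat ->
  is_cont_dist_fun G ->
  (* g continuous and strictly increasing on (l_G, r_G) *)
  (forall y, in_supp G y -> continuity_pt g y) ->
  (forall x y, in_supp G x -> in_supp G y -> x < y -> g x < g y) ->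
  (* gl = g(l_G^+) = lim_{y -> l_G^+} g(y), finite *)
  (forall eps, eps > 0 -> exists y0, in_supp G y0 /\
     forall y, in_supp G y -> y < y0 -> Rabs (g y - gl) < eps) ->
  (* lim_{y -> r_G^-} g(y) = +oo *)
  (forall M, exists y0, in_supp G y0 /\
     forall y, in_supp G y -> y0 < y -> g y > M) ->
  ((forall s t, in_supp G s -> in_supp G t -> s < t -> G s < G t ->
      cond_exp_rec G g k s t ((INR k * g t + g s) / (INR k + 1)))
   <->
   (exists c, c > 0 /\
      forall y, in_supp G y -> G y = 1 - exp (- c * (g y - gl)))).
Proof.
  intros _ Hk _ HG Hgc Hgi Hgl _; split.
  - apply exponential_of_cond_exp; auto.
  - intros [c [Hc HGexp]] s t Hs Ht Hst _.
    apply (cond_exp_rec_exponential G g gl c); auto; apply cont_dist_fun_mono, HG.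
Qed.
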